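(* Let $(M,q)$ be an instance of TNECP and let $\kappa$ be the number of connected components of its associated graph $G$. Then the TNECP instance has at least $2^\kappa-1$ solutions, and if the instance is nondegenerate it has exactly $2^\kappa-1$ solutions.
   Context: $\mathbb{T}=\mathbb{R}\cup\{-\infty\}$, $\oplus=\max$, $\odot=+$; convention $a-(-\infty)=+\infty$. A TNECP instance is $M\in\mathbb{T}^{n\times n}$, $q\in\mathbb{T}^n$ with no all-$(-\infty)$ column in $M$ and no $-\infty$ entry in $q$; a solution is $(w,z)\in\mathbb{T}^n\times\mathbb{T}^n$ with $w\oplus M\odot z=q$ (i.e. $\max(w_i,\max_j(M_{ij}+z_j))=q_i$), $\max_i(w_i+z_i)=-\infty$, and $z$ not the all-$(-\infty)$ vector. The instance is nondegenerate if for each $j$ the minimum $\min_k(q_k-M_{kj})$ is attained by exactly one $k$. The graph $G$ is the bipartite multigraph with row nodes $u_1,\dots,u_n$, column nodes $v_1,\dots,v_n$, a blue edge $u_iv_i$ for every $i$, and a red edge $u_iv_j$ whenever $q_i-M_{ij}=\min_k(q_k-M_{kj})$. *)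

From mathcomp Require Import all_boot all_order all_algebra.
Set Implicit Arguments. Unset Strict Implicit. Unset Printing Implicit Defensive.
Import Order.TTheory GRing.Theory Num.Theory.
Local Open Scope ring_scope.

Section Tropical.
Variable R : realFieldType.

(* Tropical numbers T = R u {-oo}: [None] is -oo, [Some x] is x. *)
Definition tmax (a b : option R) : option R :=
  match a, b with
  | None, _ => b
  | _, None => a
  | Some x, Some y => Some (Num.max x y)
  end.

Definition tadd (a b : option R) : option R :=
  match a, b with
  | Some x, Some y => Some (x + y)
  | _, _ => None
  end.

(* Upper-extended reals R u {+oo} (here [None] is +oo) for the
   quantities q_i - M_ij, with the convention a - (-oo) = +oo. *)
Definition umin (a b : option R) : option R :=
  match a, b with
  | None, _ => b
  | _, None => a
  | Some x, Some y => Some (Num.min x y)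
  end.

Variable n : nat.
Variables (M : 'M[option R]_n) (q : 'I_n -> R).

Definition qdiff (i j : 'I_n) : option R :=
  match M i j with
  | Some m => Some (q i - m)
  | None => None
  end.

Definition colmin (j : 'I_n) : option R := \big[umin/None]_(k < n) qdiff k j.

Definition red_edge (i j : 'I_n) : bool := qdiff i j == colmin j.

(* adjacency of the bipartite (multi)graph G on nodes u_i = inl i, v_j = inr j;
   blue edges u_i v_i and red edges; multiplicities are irrelevant for
   connectivity. *)
Definition Gadj : rel ('I_n + 'I_n) := fun x y =>
  match x, y with
  | inl i, inr j => (i == j) || red_edge i j
  | inr j, inl i => (i == j) || red_edge i j
  | _, _ => false
  end.

Definition tnecp_kappa : nat := n_comp Gadj predT.

Definition tnecp_nondegenerate : Prop :=
  forall j : 'I_n, #|[pred k : 'I_n | qdiff k j == colmin j]| = 1%N.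

Definition tmatvec (z : 'I_n -> option R) (i : 'I_n) : option R :=
  \big[tmax/None]_(j < n) tadd (M i j) (z j).

Definition tnecp_solution (w z : 'I_n -> option R) : Prop :=
  (forall i : 'I_n, tmax (w i) (tmatvec z i) = Some (q i)) /\
  \big[tmax/None]_(i < n) tadd (w i) (z i) = None /\
  (exists j : 'I_n, z j != None).

End Tropical.

From mathcomp Require Import all_boot all_order all_algebra.
From mathcomp Require Import lra.
Set Implicit Arguments. Unset Strict Implicit. Unset Printing Implicit Defensive.
Import Order.TTheory GRing.Theory Num.Theory.
Local Open Scope ring_scope.

(** Let c_j = min_k (q_k - M_kj) and let g j be a red row of column j, so that
   M_(g j) j + c_j = q_(g j), while every solution has z_j <= c_j. For any
   nonempty set S of indices with g(S) = S, putting z = c on S and -oo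
   elsewhere, and w = -oo on S and q elsewhere, gives a solution. The map g
   preserves the components of G, and the points of a component lying on
   cycles of g form a nonempty g-stable set; unions of these over the
   nonempty sets of components give 2^kappa - 1 distinct solutions. Under
   nondegeneracy g j is the only red row of column j; then the support S of
   any solution satisfies g(S) = S, and a g-stable set is determined by the
   components it meets, so there are no other solutions. *)

Section TropicalMax.
Variable R : realFieldType.

Definition tle (a : option R) (c : R) : bool := if a is Some x then x <= c else true.

Lemma tle_tmax (a b : option R) c : tle (tmax a b) c = tle a c && tle b c.
Proof. by case: a => [x|]; case: b => [y|] //=; rewrite ?ge_max ?andbT. Qed.

Lemma tmax_eqSome (a b : option R) c :
  tmax a b = Some c <-> [/\ tle a c, tle b c & a = Some c \/ b = Some c].
Proof.
case: a => [x|]; case: b => [y|] /=; split=> //.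
- move=> [<-]; case: (leP x y) => xy; rewrite lexx ?xy ?(ltW xy);
  by split=> //; first [by right | by left].
- by case=> + + [] [->] => hx hy; congr Some; [exact/max_idPl | exact/max_idPr].
- by move=> [<-]; split; rewrite ?lexx //; left.
- by case=> _ _ [].
- by move=> [<-]; split; rewrite ?lexx //; right.
- by case=> _ _ [].
- by case=> _ _ [].
Qed.

Variable I : eqType.
Implicit Types (r : seq I) (F : I -> option R).

Lemma tle_bigtmax r F c :
  tle (\big[@tmax R/None]_(k <- r) F k) c = all (fun k => tle (F k) c) r.
Proof. by elim: r => [|a r IH]; rewrite ?big_nil ?big_cons ?tle_tmax ?IH. Qed.

Lemma bigtmax_eqNone r F :
  \big[@tmax R/None]_(k <- r) F k = None <-> {in r, forall k, F k = None}.
Proof.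
elim: r => [|a r IH]; first by rewrite big_nil.
rewrite big_cons; split=> [|FN].
  case Fa: (F a) => [x|]; first by case: (\big[_/_]_(k <- r) F k).
  by move=> /= /IH FrN k; rewrite inE => /predU1P[-> | /FrN].
by rewrite FN ?mem_head //; apply/IH => k kr; apply: FN; rewrite inE kr orbT.
Qed.

Lemma bigtmax_eqSome r F c :
  \big[@tmax R/None]_(k <- r) F k = Some c <->
  {in r, forall k, tle (F k) c} /\ exists2 k, k \in r & F k = Some c.
Proof.
elim: r => [|a r IH]; first by rewrite big_nil; split=> // -[_ []].
have in_cons k : k \in r -> k \in a :: r by rewrite inE orbC => ->.
rewrite big_cons; split.
  case/tmax_eqSome=> Fa; rewrite tle_bigtmax => /allP Fr Fc.
  split; first by move=> k; rewrite inE => /predU1P[-> | /Fr].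
  case: Fc => [Fa' | /IH[_ [k kr Fk]]]; first by exists a; rewrite ?mem_head.
  by exists k; rewrite ?in_cons.
case=> Fle [k ka Fk]; apply/tmax_eqSome.
have Fr : {in r, forall i, tle (F i) c} by move=> i /in_cons /Fle.
split; [exact/Fle/mem_head | by rewrite tle_bigtmax; apply/allP |].
move: ka; rewrite inE => /predU1P[<- | kr]; [by left | right].
by apply/IH; split=> //; exists k.
Qed.

Lemma bigumin_eqSome r F c :
  \big[@umin R/None]_(k <- r) F k = Some c -> exists2 k, k \in r & F k = Some c.
Proof.
elim: r c => [|a r IH] c; first by rewrite big_nil.
have in_cons k : k \in r -> k \in a :: r by rewrite inE orbC => ->.
rewrite big_cons; case Fa: (F a) => [x|];
  case Fr: (\big[_/_]_(k <- r) F k) => [y|] //= [<-];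
  try by exists a; rewrite ?mem_head.
- case: (leP x y) => _; first by exists a; rewrite ?mem_head.
  by have [k kr Fk] := IH _ Fr; exists k; rewrite ?in_cons.
- by have [k kr Fk] := IH _ Fr; exists k; rewrite ?in_cons.
Qed.

Lemma bigumin_le r F k x : k \in r -> F k = Some x ->
  exists2 c, \big[@umin R/None]_(k <- r) F k = Some c & c <= x.
Proof.
move=> + Fk; elim: r => [|a r IH] //; rewrite big_cons inE => /predU1P[<- | /IH].
  rewrite Fk; case: (\big[_/_]_(k <- r) F k) => [y|] /=; last by exists x.
  by exists (Num.min x y); rewrite ?ge_min ?lexx.
case=> c -> cx; case: (F a) => [y|] /=; last by exists c.
by exists (Num.min y c); rewrite ?ge_min ?cx ?orbT.
Qed.

End TropicalMax.

Lemma imset_sub_eq (T : finType) (f : T -> T) (A B : {set T}) :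
  B \subset A -> A \subset f @: B -> B = A /\ f @: A = A.
Proof.
move=> BA AfB; have cardAB : (#|A| <= #|B|)%N.
  by rewrite (leq_trans (subset_leq_card AfB)) ?leq_imset_card.
have eqBA : B = A by apply/eqP; rewrite eqEcard BA cardAB.
split=> //; rewrite -{1}eqBA; apply/esym/eqP.
by rewrite eqEcard AfB (leq_trans (leq_imset_card _ _)) // eqBA.
Qed.

Section PeriodicPoints.
Variables (T : finType) (f : T -> T).

Definition periodic : {set T} := cofixset (fun A : {set T} => f @: A).

Let imset_mono : {homo (fun A : {set T} => f @: A) : A B / A \subset B}.
Proof. by move=> A B; apply: imsetS. Qed.

Lemma imset_periodic : f @: periodic = periodic.
Proof. exact: cofixsetK imset_mono. Qed.

Lemma periodic_max (A : {set T}) : f @: A = A -> A \subset periodic.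
Proof.
move=> fA; have /maxsetP[_ maxP] := maxset_cofix imset_mono.
suff <- : A :|: periodic = periodic by apply: subsetUl.
by apply: maxP; rewrite ?subsetUr // inE imsetU fA imset_periodic.
Qed.

Lemma periodicE : periodic = [set iter #|T| f x | x in T].
Proof.
suff iterC k : iter k (funsetC (fun A => f @: A)) set0 = ~: [set iter k f x | x in T].
  by rewrite /periodic /cofixset /fixset iterC setCK.
elim: k => [|k IH] /=.
  by apply/setP=> x; rewrite !inE; apply/esym/negbF/(imset_f (fun x => x)).
by rewrite IH /funsetC setCK -imset_comp.
Qed.

Lemma iter_periodic x : iter #|T| f x \in periodic.
Proof. by rewrite periodicE imset_f. Qed.

Lemma periodic_f x : x \in periodic -> f x \in periodic.
Proof. by move=> xP; rewrite -imset_periodic imset_f. Qed.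

Lemma periodic_inj : {in periodic &, injective f}.
Proof. by apply/imset_injP; rewrite imset_periodic. Qed.

Lemma periodic_invariant_mem (A : {set T}) x :
  f @: A = A -> x \in periodic -> (f x \in A) = (x \in A).
Proof.
move=> fA xP; apply/idP/idP=> [|xA]; last by rewrite -fA imset_f.
rewrite -{1}fA => /imsetP[y yA /periodic_inj-> //].
exact: subsetP (periodic_max fA) y yA.
Qed.

Lemma periodic_invariant_iter (A : {set T}) k x :
  f @: A = A -> x \in periodic -> (iter k f x \in A) = (x \in A).
Proof.
move=> fA; elim: k x => [//|k IH] x xP.
by rewrite iterSr IH ?periodic_f // (periodic_invariant_mem fA xP).
Qed.

End PeriodicPoints.

Section Tnecp.
Variables (R : realFieldType) (n : nat) (M : 'M[option R]_n) (q : 'I_n -> R).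
Hypothesis colM : forall j : 'I_n, exists i : 'I_n, M i j != None.

(* The default [0] is never used: [colM] makes every [colmin] finite. *)
Definition cmin j : R := odflt 0 (colmin M q j).

Lemma colmin_Some j : colmin M q j = Some (cmin j).
Proof.
have [i] := colM j; case Mij: (M i j) => [m|] // _.
have qij : qdiff M q i j = Some (q i - m) by rewrite /qdiff Mij.
have [c cmin_c _] := bigumin_le (F := qdiff M q ^~ j) (mem_index_enum i) qij.
by rewrite /cmin /colmin cmin_c.
Qed.

Lemma cmin_le i j m : M i j = Some m -> cmin j <= q i - m.
Proof.
move=> Mij; have qij : qdiff M q i j = Some (q i - m) by rewrite /qdiff Mij.
have [c cmin_c] := bigumin_le (F := qdiff M q ^~ j) (mem_index_enum i) qij.
by move: (colmin_Some j); rewrite /colmin cmin_c => -[<-].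
Qed.

Lemma red_edgeP i j :
  reflect (exists2 m, M i j = Some m & q i - m = cmin j) (red_edge M q i j).
Proof.
rewrite /red_edge colmin_Some /qdiff; case: (M i j) => [m|]; last by right => -[].
by apply: (iffP eqP) => [[<-] | [m' [<-] <-]]; [exists m |].
Qed.

Definition red_row (j : 'I_n) : 'I_n := odflt j [pick i | red_edge M q i j].

Lemma red_edge_row j : red_edge M q (red_row j) j.
Proof.
rewrite /red_row; case: pickP => [//|noRed].
have /bigumin_eqSome[i _ qij] := colmin_Some j.
by move: (noRed i); rewrite /red_edge qij colmin_Some eqxx.
Qed.

Definition zsol (S : {set 'I_n}) : {ffun 'I_n -> option R} :=
  [ffun j => if j \in S then Some (cmin j) else None].

Definition wsol (S : {set 'I_n}) : {ffun 'I_n -> option R} :=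
  [ffun i => if i \in S then None else Some (q i)].

Lemma zsol_inj : injective zsol.
Proof.
move=> S1 S2 eqz; apply/setP=> j; move/ffunP/(_ j): eqz.
by rewrite !ffunE; case: (j \in S1); case: (j \in S2).
Qed.

Lemma tle_tadd i j x : tle x (cmin j) -> tle (tadd (M i j) x) (q i).
Proof.
case Mij: (M i j) => [m|]; case: x => [x|] //= xle.
by have := cmin_le Mij; lra.
Qed.

Lemma tle_tmatvec z i : (forall j, tle (z j) (cmin j)) -> tle (tmatvec M z i) (q i).
Proof.
by move=> zle; rewrite /tmatvec tle_bigtmax; apply/allP=> j _; apply: tle_tadd.
Qed.

Lemma solution_of_invariant (S : {set 'I_n}) :
  S != set0 -> S \subset red_row @: S -> tnecp_solution M q (wsol S) (zsol S).
Proof.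
move=> S0 SgS.
have zle j : tle (zsol S j) (cmin j) by rewrite ffunE; case: ifP; rewrite //= lexx.
split; [move=> i | split].
- rewrite ffunE; case: ifP => iS; last first.
    by apply/tmax_eqSome; split; [rewrite /= lexx | exact: tle_tmatvec | left].
  have /imsetP[j jS ->] := subsetP SgS i iS.
  apply/bigtmax_eqSome; split=> [k _ | ]; first exact: tle_tadd.
  exists j; rewrite ?mem_index_enum // ffunE jS.
  by have /red_edgeP[m -> qm] := red_edge_row j; congr Some; lra.
- by apply/bigtmax_eqNone => k _; rewrite !ffunE; case: (k \in S).
- by have [j jS] := set0Pn _ S0; exists j; rewrite ffunE jS.
Qed.

Local Notation G := (Gadj M q).
Local Notation comp := (fingraph.root G).

Lemma Gadj_sym : symmetric G.
Proof. by case=> [i|i] [j|j]. Qed.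

Let G_connect_sym := sym_connect_sym Gadj_sym.

Lemma comp_inr i : comp (inr i) = comp (inl i).
Proof. by apply/(fingraph.rootP G_connect_sym)/connect1; rewrite /= eqxx. Qed.

Lemma comp_red_row j : comp (inl (red_row j)) = comp (inl j).
Proof.
apply/(fingraph.rootP G_connect_sym)/(connect_trans (y := inr j)); apply: connect1.
  by rewrite /= red_edge_row orbT.
by rewrite /= eqxx.
Qed.

Lemma comp_iter_red_row k j : comp (inl (iter k red_row j)) = comp (inl j).
Proof. by elim: k => [//|k IH]; rewrite iterS comp_red_row. Qed.

Lemma roots_periodic r :
  roots G r -> exists2 i, i \in periodic red_row & comp (inl i) = r.
Proof.
move=> /eqP rr; have [j <-] : exists j, comp (inl j) = r.
  by case: r rr => j <-; exists j; rewrite ?comp_inr.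
by exists (iter #|'I_n| red_row j); rewrite ?iter_periodic ?comp_iter_red_row.
Qed.

Definition comp_roots : {set 'I_n + 'I_n} := [set x | roots G x].

Lemma kappa_comp_roots : tnecp_kappa M q = #|comp_roots|.
Proof. by apply: eq_card => x; rewrite !inE andbT. Qed.

Definition cycles (K : {set 'I_n + 'I_n}) : {set 'I_n} :=
  [set i in periodic red_row | comp (inl i) \in K].

Lemma cycles_sub_imset (K : {set 'I_n + 'I_n}) :
  cycles K \subset red_row @: cycles K.
Proof.
apply/subsetP=> i; rewrite inE => /andP[iP iK].
move: iP; rewrite -imset_periodic => /imsetP[j jP ij].
by apply/imsetP; exists j; rewrite // inE jP -comp_red_row -ij iK.
Qed.

Lemma cycles_neq0 (K : {set 'I_n + 'I_n}) :
  K \subset comp_roots -> K != set0 -> cycles K != set0.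
Proof.
move=> KR /set0Pn[r rK]; have := subsetP KR r rK; rewrite inE.
by case/roots_periodic=> i iP ir; apply/set0Pn; exists i; rewrite inE iP ir rK.
Qed.

Lemma cycles_subset (K1 K2 : {set 'I_n + 'I_n}) :
  K1 \subset comp_roots -> cycles K1 \subset cycles K2 -> K1 \subset K2.
Proof.
move=> K1R sub12; apply/subsetP=> r rK1; have := subsetP K1R r rK1.
rewrite inE => /roots_periodic[i iP ir].
have : i \in cycles K2 by apply: (subsetP sub12); rewrite inE iP ir rK1.
by rewrite inE ir => /andP[].
Qed.

Lemma cycles_inj : {in powerset comp_roots &, injective cycles}.
Proof.
move=> K1 K2; rewrite !powersetE => K1R K2R eqK.
apply/eqP; rewrite eqEsubset (cycles_subset K1R) ?(cycles_subset K2R) //.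
all: by rewrite eqK.
Qed.

Definition tnecp_sols : seq ({ffun 'I_n -> option R} * {ffun 'I_n -> option R}) :=
  [seq (wsol (cycles K), zsol (cycles K)) | K <- enum (powerset comp_roots :\ set0)].

Lemma tnecp_sols_uniq : uniq tnecp_sols.
Proof.
rewrite map_inj_in_uniq ?enum_uniq // => K1 K2.
rewrite !mem_enum !inE => /andP[_ K1R] /andP[_ K2R] [_ /zsol_inj].
by apply: cycles_inj; rewrite powersetE.
Qed.

Lemma size_tnecp_sols : size tnecp_sols = (2 ^ tnecp_kappa M q - 1)%N.
Proof.
rewrite size_map -cardE kappa_comp_roots -card_powerset.
by rewrite (cardsD1 set0 (powerset comp_roots)) powersetE sub0set add1n subn1.
Qed.

Lemma tnecp_sols_solution p : p \in tnecp_sols -> tnecp_solution M q p.1 p.2.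
Proof.
case/mapP=> K; rewrite mem_enum !inE => /andP[K0 KR] ->.
exact: solution_of_invariant (cycles_neq0 KR K0) (cycles_sub_imset K).
Qed.

Lemma solution_tle_cmin w z : tnecp_solution M q w z -> forall j, tle (z j) (cmin j).
Proof.
case=> rows _ j; have /red_edgeP[m Mgj qm] := red_edge_row j.
have /tmax_eqSome[_ + _] := rows (red_row j).
rewrite /tmatvec tle_bigtmax => /allP/(_ j (mem_index_enum j)).
by rewrite Mgj; case: (z j) => [x|] //= ?; lra.
Qed.

Lemma nondegenerate_red_unique :
  tnecp_nondegenerate M q -> forall i j, red_edge M q i j -> i = red_row j.
Proof.
move=> nondeg i j red_ij.
have /card_le1P le1 : (#|[pred k | qdiff M q k j == colmin M q j]| <= 1)%N.
  by rewrite nondeg.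
by apply/eqP; move: (le1 _ (red_edge_row j) i); rewrite !inE => <-.
Qed.

Section Nondegenerate.
Hypothesis red_unique : forall i j, red_edge M q i j -> i = red_row j.

Lemma tmatvec_attained z i : (forall j, tle (z j) (cmin j)) ->
  tmatvec M z i = Some (q i) -> exists2 j, z j = Some (cmin j) & i = red_row j.
Proof.
move=> zle /bigtmax_eqSome[_ [j _]].
case Mij: (M i j) => [m|] //; case zj: (z j) => [x|] //= [mx].
have := cmin_le Mij; have := zle j; rewrite zj /= => xle cle.
have xc : x = cmin j by lra.
exists j; first by rewrite zj xc.
by apply: red_unique; apply/red_edgeP; exists m => //; lra.
Qed.

Lemma solution_row w z i : tnecp_solution M q w z ->
  w i = Some (q i) \/ exists2 j, z j = Some (cmin j) & i = red_row j.
Proof.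
move=> sol; have [rows _] := sol.
have /tmax_eqSome[_ _ [|/(tmatvec_attained (solution_tle_cmin sol))]] := rows i.
  by left.
by right.
Qed.

Lemma solution_support (w z : {ffun 'I_n -> option R}) : tnecp_solution M q w z ->
  exists S, [/\ S != set0, red_row @: S = S & (w, z) = (wsol S, zsol S)].
Proof.
move=> sol; have [_ [/bigtmax_eqNone disj [j0 zj0]]] := sol.
have wz i : w i = None \/ z i = None.
  by move: (disj i (mem_index_enum i)); case: (w i); case: (z i) => //; auto.
pose S := [set j | z j != None]; pose T := [set j | z j == Some (cmin j)].
have TS : T \subset S by apply/subsetP=> j; rewrite !inE => /eqP->.
have ST : S \subset red_row @: T.
  apply/subsetP=> i; rewrite inE => zi.
  have [wi|[j zj ->]] := solution_row i sol; last by rewrite imset_f ?inE ?zj.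
  by case: (wz i) zi; rewrite ?wi // => ->.
have [eqTS gS] := imset_sub_eq TS ST; rewrite -eqTS in ST.
exists S; split => //; first by apply/set0Pn; exists j0; rewrite inE.
congr pair; apply/ffunP=> i; rewrite !ffunE.
  case: ifP => iS; first by case: (wz i) => // zi; move: iS; rewrite inE zi.
  have [// | [j zj ij]] := solution_row i sol.
  by move: iS; rewrite -gS ij imset_f // -eqTS inE zj.
case: ifP => iS; first by move: iS; rewrite -eqTS inE => /eqP.
by move/negbT: iS; rewrite inE negbK => /eqP.
Qed.

Lemma invariant_cycles S : S != set0 -> red_row @: S = S ->
  exists2 K, K \in powerset comp_roots :\ set0 & cycles K = S.
Proof.
move=> S0 gS; have SP := periodic_max gS.
(* Every edge of [G] joins index [j] to [j] or to [red_row j], so [p] is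
   constant on components. *)
pose p : pred ('I_n + 'I_n) := fun v =>
  iter #|'I_n| red_row (match v with inl i | inr i => i end) \in S.
have p_red j : p (inl (red_row j)) = p (inl j).
  by rewrite /p -iterSr iterS (periodic_invariant_mem gS) ?iter_periodic.
have p_closed : closed G p.
  move=> [i|i] [j|j] //= /orP[/eqP-> | /red_unique->] //.
    exact: p_red.
  exact/esym/p_red.
have pS i : i \in periodic red_row -> p (inl i) = (i \in S).
  exact: periodic_invariant_iter gS.
exists [set comp (inl i) | i in S].
  rewrite !inE imset_eq0 S0 /=; apply/subsetP=> _ /imsetP[i _ ->].
  by rewrite inE (fingraph.roots_root G_connect_sym).
apply/setP=> i; rewrite inE; apply/andP/idP=> [[iP /imsetP[s sS]] | iS].
  move/(fingraph.rootP G_connect_sym)/(closed_connect p_closed).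
  move=> eq_p; have : p (inl i) = p (inl s) := eq_p.
  by rewrite (pS i iP) (pS s (subsetP SP s sS)) => ->.
by split; [exact: (subsetP SP) | exact: imset_f].
Qed.

Lemma solution_in_tnecp_sols (w z : {ffun 'I_n -> option R}) :
  tnecp_solution M q w z -> (w, z) \in tnecp_sols.
Proof.
case/solution_support=> S [S0 gS ->].
have [K KR <-] := invariant_cycles S0 gS.
by apply: map_f; rewrite mem_enum.
Qed.

End Nondegenerate.

End Tnecp.

Theorem theorem3p4 (R : realFieldType) (n : nat) (M : 'M[option R]_n)
    (q : 'I_n -> R) :
  (forall j : 'I_n, exists i : 'I_n, M i j != None) ->
  (exists s : seq ({ffun 'I_n -> option R} * {ffun 'I_n -> option R}),
      [/\ uniq s, size s = (2 ^ tnecp_kappa M q - 1)%N &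
          forall p, p \in s -> tnecp_solution M q p.1 p.2]) /\
  (tnecp_nondegenerate M q ->
    exists s : seq ({ffun 'I_n -> option R} * {ffun 'I_n -> option R}),
      uniq s /\ size s = (2 ^ tnecp_kappa M q - 1)%N /\
      forall w z : {ffun 'I_n -> option R},
        tnecp_solution M q w z <-> (w, z) \in s).
Proof.
move=> colM; split.
  exists (tnecp_sols M q); split; [exact: tnecp_sols_uniq | exact: size_tnecp_sols |].
  exact: tnecp_sols_solution.
move=> /(nondegenerate_red_unique colM) red_unique.
exists (tnecp_sols M q); split; first exact: tnecp_sols_uniq.
split; first exact: size_tnecp_sols.
move=> w z; split; first exact: solution_in_tnecp_sols.
exact: (tnecp_sols_solution colM (p := (w, z))).
Qed.
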